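(* Let $q$ be a prime power and let $n,t,m,m'$ be positive integers. Let $\mathbf{C}_2$ be a linear sum-rank code over $\mathbf{F}_q$ of block length $t$ and matrix size $m\times m'$, with dimension $k_2$ (over $\mathbf{F}_q$) and minimum sum-rank distance $d_2$. Let $\mathbf{C}_1$ be an $[n,k_1,d_1]_{q^{k_2}}$ linear code (in the Hamming metric) over $\mathbf{F}_{q^{k_2}}$. Then there is a linear sum-rank code $\mathbf{C}$ over $\mathbf{F}_q$ of block length $nt$ and matrix size $m\times m'$ whose dimension is $k_1k_2$ and whose minimum sum-rank distance is at least $d_1 d_2$.
   Context: For positive integers $a\le b$, $\mathbf{F}_q^{(a,b)}$ denotes the set of $a\times b$ matrices over $\mathbf{F}_q$. A sum-rank code of block length $t$ and matrix size $m\times m'$ over $\mathbf{F}_q$ is a subset of $\mathbf{F}_q^{(m,m')}\oplus\cdots\oplus\mathbf{F}_q^{(m,m')}$ ($t$ summands); it is linear if it is an $\mathbf{F}_q$-linear subspace, and its dimension is its $\mathbf{F}_q$-dimension. The sum-rank weight of $\mathbf{x}=(\mathbf{x}_1,\dots,\mathbf{x}_t)$ is $\sum_{i=1}^t \mathrm{rank}(\mathbf{x}_i)$, the sum-rank distance is $d_{sr}(\mathbf{x},\mathbf{y})=\sum_i\mathrm{rank}(\mathbf{x}_i-\mathbf{y}_i)$, and the minimum sum-rank distance of a code is the minimum distance between distinct codewords. An $[n,k,d]_Q$ code is a linear code of length $n$, dimension $k$ and minimum Hamming distance $d$ over $\mathbf{F}_Q$. *)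

From HB Require Import structures.
From mathcomp Require Import all_boot all_order all_algebra all_field.
Set Implicit Arguments. Unset Strict Implicit. Unset Printing Implicit Defensive.
Import GRing.Theory.
Local Open Scope ring_scope.

Definition srspace (F : fieldType) (t m m' : nat) := {ffun 'I_t -> 'M[F]_(m, m')}.

Definition sr_weight (F : fieldType) (t m m' : nat) (x : srspace F t m m') : nat :=
  (\sum_(i < t) \rank (x i))%N.
Definition sr_dist (F : fieldType) (t m m' : nat) (x y : srspace F t m m') : nat :=
  sr_weight (x - y).

Definition ham_weight (K : fieldType) (n : nat) (x : 'rV[K]_n) : nat :=
  #|[set i : 'I_n | x 0 i != 0]|.
Definition ham_dist (K : fieldType) (n : nat) (x y : 'rV[K]_n) : nat :=
  ham_weight (x - y).

Definition min_dist_is (R : fieldType) (V : vectType R) (dist : V -> V -> nat) (C : {vspace V}) (d : nat) : Prop :=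
  (exists x, exists y, [/\ x \in C, y \in C, x != y & dist x y = d]) /\
  (forall x y, x \in C -> y \in C -> x != y -> (d <= dist x y)%N).

Definition min_dist_ge (R : fieldType) (V : vectType R) (dist : V -> V -> nat) (C : {vspace V}) (d : nat) : Prop :=
  forall x y, x \in C -> y \in C -> x != y -> (d <= dist x y)%N.

From HB Require Import structures.
From mathcomp Require Import all_boot all_order all_algebra all_field.
From mathcomp Require Import fingroup cyclic.
Set Implicit Arguments. Unset Strict Implicit. Unset Printing Implicit Defensive.
Import GRing.Theory.
Local Open Scope ring_scope.

(* Since #|K| = q^k2, the field F embeds in K: if a generates F^* and r is the
   minimal polynomial of a over the prime field, then r divides X^#|K| - X, so
   it has a root b in K, and evaluation at b factors through evaluation at a.
   Through this embedding K is an F-space of dimension k2, and an F-basis of K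
   gives a semilinear bijection phi from K onto C2.  Applying phi to each of the
   n coordinates of the words of C1 and concatenating the blocks gives an
   F-linear code with #|C1| = q^(k1 k2) words; a nonzero word of C1 has at least
   d1 nonzero coordinates, each contributing sum-rank weight at least d2. *)

Section RmorphFactor.

Variables (A B C : nzRingType) (f : {rmorphism A -> B}) (g : {rmorphism A -> C}).
Hypotheses (f_surj : forall y, exists x, f x = y) (ker_fg : forall x, f x = 0 -> g x = 0).

Let f_surjb y : exists x, f x == y.
Proof. by have [x fx] := f_surj y; exists x; apply/eqP. Qed.

Definition rmorph_factor (y : B) : C := g (xchoose (f_surjb y)).

Lemma rmorph_factorE x : rmorph_factor (f x) = g x.
Proof.
apply/eqP; rewrite -subr_eq0 -rmorphB; apply/eqP/ker_fg.
by rewrite rmorphB (eqP (xchooseP (f_surjb _))) subrr.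
Qed.

Lemma rmorph_factor_zmod : zmod_morphism rmorph_factor.
Proof.
move=> y z; have [[x <-] [x' <-]] := (f_surj y, f_surj z).
by rewrite -rmorphB !rmorph_factorE rmorphB.
Qed.

Lemma rmorph_factor_monoid : monoid_morphism rmorph_factor.
Proof.
split=> [|y z]; first by rewrite -(rmorph1 f) rmorph_factorE rmorph1.
have [[x <-] [x' <-]] := (f_surj y, f_surj z).
by rewrite -rmorphM !rmorph_factorE rmorphM.
Qed.

Lemma rmorph_factorP : exists h : {rmorphism B -> C}, forall x, h (f x) = g x.
Proof.
pose h : {rmorphism B -> C} := HB.pack rmorph_factor
  (GRing.isZmodMorphism.Build B C _ rmorph_factor_zmod)
  (GRing.isMonoidMorphism.Build B C _ rmorph_factor_monoid).
by exists h; apply: rmorph_factorE.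
Qed.

End RmorphFactor.

Lemma finField_primitive (F : finFieldType) :
  exists a : F, forall x, x != 0 -> exists n, x = a ^+ n.
Proof.
have /cyclicP[u Du] := field_unit_group_cyclic [set: {unit F}]%G.
exists (FinRing.uval u) => x nz_x.
have Ux : x \is a GRing.unit by rewrite unitfE.
have : (Sub x Ux : {unit F}) \in <[u]>%g by rewrite -Du inE.
by case/cycleP=> n Dx; exists n; rewrite -FinRing.val_unitX -Dx.
Qed.

Lemma finField_dvd_genPoly_root (K : finFieldType) (r : {poly K}) :
  (1 < size r)%N -> r %| 'X^#|K| - 'X -> exists b, root r b.
Proof.
rewrite finField_genPoly => r_gt1 /dvdp_prod_XsubC[msk].
case: (mask msk _) => [|b s] r_prod.
  by move/eqp_size: r_prod r_gt1; rewrite big_nil size_poly1 => ->.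
by exists b; rewrite (eqp_root r_prod) root_prod_XsubC mem_head.
Qed.

Lemma expf_cardX (F : finFieldType) (x : F) k : x ^+ (#|F| ^ k) = x.
Proof. by elim: k => [|k IHk]; rewrite ?expr1 // expnSr exprM IHk expf_card. Qed.

Lemma prime_field_minPoly (F : finFieldType) p (pF : p \in [pchar F]) (a : F) :
  exists2 r : {poly 'F_p}, (1 < size r)%N &
    forall g, (map_poly (in_alg (pPrimeCharType pF)) g).[a] = 0 -> r %| g.
Proof.
pose L := pPrimeCharType pF; have /polyOver1P[r Dr] := minPolyOver 1 (a : L).
exists r => [|g ga0].
  rewrite -(size_map_poly (in_alg L)) -Dr.
  by apply: root_size_gt1 (root_minPoly 1 (a : L)); rewrite monic_neq0 ?monic_minPoly.
rewrite -(dvdp_map (in_alg L)) -Dr.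
by apply: minPoly_dvdp; [apply/polyOver1P; exists g | apply/rootP].
Qed.

Lemma finField_embedding (F K : finFieldType) k :
  #|K| = (#|F| ^ k)%N -> inhabited {rmorphism F -> K}.
Proof.
move=> cardK; have [p p_pr pF] := finPcharP F.
have pK : p \in [pchar K].
  apply: (@card_finPcharP _ _ (logn p #|F| * k)) p_pr.
  by rewrite cardK {1}(card_pprimeChar pF) expnM.
pose L := pPrimeCharType pF; pose LK := pPrimeCharType pK.
have [a a_gen] := finField_primitive F.
pose evF : {rmorphism {poly 'F_p} -> L} := horner_morph (fun c => mulrC (a : L) (in_alg L c)).
have evF_surj x : exists g, evF g = x.
  have [->|/a_gen[n ->]] := eqVneq x 0; first by exists 0; rewrite rmorph0.
  by exists 'X^n; rewrite rmorphXn /= horner_morphX.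
have [r r_gt1 r_dvd] := prime_field_minPoly pF a.
have [b rb] : exists b : LK, root (map_poly (in_alg LK) r) b.
  apply: finField_dvd_genPoly_root; first by rewrite size_map_poly.
  have -> : 'X^#|LK| - 'X = map_poly (in_alg LK) ('X^#|K| - 'X).
    by rewrite rmorphB /= map_polyXn map_polyX.
  rewrite dvdp_map; apply: r_dvd.
  by rewrite rmorphB /= map_polyXn map_polyX !hornerE cardK expf_cardX subrr.
pose evK : {rmorphism {poly 'F_p} -> LK} := horner_morph (fun c => mulrC b (in_alg LK c)).
have ker_sub g : evF g = 0 -> evK g = 0.
  by move/r_dvd/divpK <-; rewrite rmorphM /= [evK r](rootP rb) mulr0.
have [psi _] := rmorph_factorP evF_surj ker_sub.
exact: inhabits psi.
Qed.

Section SemilinearCoordinates.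

Variables (F K : finFieldType) (psi : {rmorphism F -> K}).

(* Indexing [e] by [nat] lets one sequence serve all lengths [j]. *)
Definition psi_comb j (e : nat -> K) (c : 'rV[F]_j) : K :=
  \sum_(i < j) psi (c 0 i) * e i.

Lemma psi_combZD j (e : nat -> K) a (c d : 'rV[F]_j) :
  psi_comb e (a *: c + d) = psi a * psi_comb e c + psi_comb e d.
Proof.
rewrite /psi_comb mulr_sumr -big_split; apply: eq_bigr => i _.
by rewrite !mxE rmorphD rmorphM mulrDl mulrA.
Qed.

Lemma psi_comb0 j (e : nat -> K) : psi_comb e (0 : 'rV[F]_j) = 0.
Proof. by rewrite /psi_comb big1 // => i _; rewrite mxE rmorph0 mul0r. Qed.

Definition psi_free j (e : nat -> K) := forall c : 'rV[F]_j, psi_comb e c = 0 -> c = 0.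

Lemma psi_comb_inj j (e : nat -> K) : psi_free j e -> injective (@psi_comb j e).
Proof.
move=> e_free c d eq_cd; apply/eqP; rewrite -subr_eq0; apply/eqP/e_free.
by rewrite -scaleN1r addrC psi_combZD eq_cd rmorphN1 mulN1r addNr.
Qed.

Lemma psi_free_ext j (e : nat -> K) (y : K) :
    psi_free j e -> (forall c : 'rV[F]_j, psi_comb e c != y) ->
  psi_free j.+1 (fun i => if i == j then y else e i).
Proof.
move=> e_free y_new c.
pose c' := \row_(i < j) c 0 (widen_ord (leqnSn j) i).
have -> : psi_comb (fun i => if i == j then y else e i) c
          = psi_comb e c' + psi (c 0 ord_max) * y.
  rewrite /psi_comb big_ord_recr /= eqxx; congr (_ + _).
  by apply: eq_bigr => i _; rewrite mxE /= ltn_eqF.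
have [cj0 | cj_nz] := eqVneq (c 0 ord_max) 0.
  rewrite cj0 rmorph0 mul0r addr0 => /e_free c'0; apply/rowP => i.
  case: (unliftP ord_max i) => [i' -> | ->]; rewrite ?cj0 ?mxE //.
  have -> : lift ord_max i' = widen_ord (leqnSn j) i' by apply: val_inj; apply: lift_max.
  by have := congr1 (fun u : 'rV_j => u 0 i') c'0; rewrite !mxE.
move/eqP; rewrite addr_eq0 => /eqP Dy; case/negP: (y_new (- (c 0 ord_max)^-1 *: c')).
rewrite -[_ *: c']addr0 psi_combZD psi_comb0 addr0 Dy.
by rewrite rmorphN fmorphV mulrN mulNr opprK mulKf ?fmorph_eq0.
Qed.

Lemma exists_psi_free j : (#|F| ^ j <= #|K|)%N -> exists e : nat -> K, psi_free j e.
Proof.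
have F_gt1 : (1 < #|F|)%N := finNzRing_gt1 F.
elim: j => [_ | j IHj le_Fj1_K]; first by exists (fun _ => 0) => c _; apply/rowP => -[].
have lt_Fj_K : (#|F| ^ j < #|K|)%N.
  by apply: leq_trans le_Fj1_K; rewrite ltn_exp2l.
have [e e_free] := IHj (ltnW lt_Fj_K).
have /subsetPn[y _ y_new] : ~~ ([set: K] \subset [set psi_comb e c | c : 'rV[F]_j]).
  apply/negP => /subset_leq_card; apply/negP; rewrite -ltnNge.
  by rewrite (leq_ltn_trans (leq_imset_card _ _)) // !cardsT card_mx mul1n.
exists (fun i => if i == j then y else e i); apply: psi_free_ext e_free _ => c.
by apply: contraNneq y_new => <-; apply: imset_f.
Qed.

Lemma exists_semilinear_embedding (V : vectType F) (U : {vspace V}) :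
    #|K| = (#|F| ^ \dim U)%N ->
  exists phi : K -> V, [/\ forall a y z, phi (psi a * y + z) = a *: phi y + phi z,
                           injective phi & forall y, phi y \in U].
Proof.
move=> cardK; have [e /psi_comb_inj e_inj] := exists_psi_free (eq_leq (esym cardK)).
have [coords _ coordsK] : bijective (@psi_comb (\dim U) e).
  by apply: inj_card_bij e_inj _; rewrite card_mx mul1n cardK.
pose b := vbasis U.
exists (fun y => \sum_(i < \dim U) coords y 0 i *: b`_i); split.
- move=> a y z; have -> : coords (psi a * y + z) = a *: coords y + coords z.
    by apply: e_inj; rewrite psi_combZD !coordsK.
  rewrite scaler_sumr -big_split; apply: eq_bigr => i _.
  by rewrite !mxE scalerDl scalerA.
- move=> y z eq_yz; apply: (can_inj coordsK); apply/rowP => i.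
  by have := congr1 (coord b i) eq_yz; rewrite !coord_sum_free // (basis_free (vbasisP U)).
- move=> y; apply: rpred_sum => i _; apply/rpredZ/vbasis_mem/mem_nth.
  by rewrite size_tuple.
Qed.

End SemilinearCoordinates.

Section MinDist.

Variables (R : fieldType) (V : vectType R) (w : V -> nat) (C : {vspace V}) (d : nat).

Lemma min_dist_is_weight : min_dist_is (fun x y => w (x - y)) C d ->
  forall x, x \in C -> x != 0 -> (d <= w x)%N.
Proof. by case=> _ min_d x xC x_nz; have := min_d x 0 xC (mem0v C) x_nz; rewrite subr0. Qed.

Lemma min_dist_ge_weight : (forall x, x \in C -> x != 0 -> (d <= w x)%N) ->
  min_dist_ge (fun x y => w (x - y)) C d.
Proof. by move=> wC x y xC yC x_neq_y; rewrite wC ?memvB ?subr_eq0. Qed.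

End MinDist.

Lemma span_ind (R : fieldType) (V : vectType R) (P : V -> Prop) (s : seq V) :
    P 0 -> (forall a x y, P x -> P y -> P (a *: x + y)) -> {in s, forall x, P x} ->
  forall x, x \in <<s>>%VS -> P x.
Proof.
move=> P0 PZD Ps x /(@coord_span _ _ _ (in_tuple s)) ->.
have PD x1 x2 : P x1 -> P x2 -> P (x1 + x2).
  by move=> Px1 /(PZD 1 _ _ Px1); rewrite scale1r.
apply: (big_ind P) => // i _; rewrite -[_ *: _]addr0; apply: PZD => //.
by apply/Ps/mem_nth.
Qed.

Section Concat.

Variables (F : fieldType) (n t m m' : nat).

Definition sr_concat (x : 'I_n -> srspace F t m m') : srspace F (n * t) m m' :=
  [ffun k => mxvec (\matrix_(i, l) x i l) 0 k].

Lemma sr_concatE x i l : sr_concat x (mxvec_index i l) = x i l.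
Proof. by rewrite ffunE mxvecE mxE. Qed.

Lemma sr_concat_inj x y : sr_concat x = sr_concat y -> x =1 y.
Proof. by move=> eq_xy i; apply/ffunP => l; rewrite -!sr_concatE eq_xy. Qed.

Lemma eq_sr_concat x y : x =1 y -> sr_concat x = sr_concat y.
Proof.
move=> eq_xy; apply/ffunP => k; rewrite !ffunE; congr (mxvec _ 0 k).
by apply/matrixP => i l; rewrite !mxE eq_xy.
Qed.

Lemma sr_concatZD a x y :
  sr_concat (fun i => a *: x i + y i) = a *: sr_concat x + sr_concat y.
Proof.
by apply/ffunP; case/mxvec_indexP => i l; rewrite !ffunE !mxvecE !mxE !ffunE.
Qed.

Lemma sr_weight_concat x : sr_weight (sr_concat x) = (\sum_i sr_weight (x i))%N.
Proof.
rewrite /sr_weight (reindex _ (curry_mxvec_bij n t)) /= pair_big /=.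
by apply: eq_bigr => -[i l] _; rewrite sr_concatE.
Qed.

End Concat.

Section ConcatenatedCode.

Variables (F K : finFieldType) (psi : {rmorphism F -> K}) (n t m m' : nat).
Variable phi : K -> srspace F t m m'.
Hypotheses (phiZD : forall a y z, phi (psi a * y + z) = a *: phi y + phi z)
           (phi_inj : injective phi).

Lemma phi0 : phi 0 = 0.
Proof.
by have /eqP := phiZD 1 0 0; rewrite mulr0 addr0 scale1r -subr_eq subrr => /eqP.
Qed.

Definition concat_map (c : 'rV[K]_n) : srspace F (n * t) m m' :=
  sr_concat (fun i => phi (c 0 i)).

Lemma concat_mapZD a c d :
  concat_map (psi a *: c + d) = a *: concat_map c + concat_map d.
Proof.
by rewrite /concat_map -sr_concatZD; apply: eq_sr_concat => i; rewrite !mxE phiZD.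
Qed.

Lemma concat_map0 : concat_map 0 = 0.
Proof. by apply/ffunP; case/mxvec_indexP => i l; rewrite sr_concatE mxE phi0 !ffunE. Qed.

Lemma concat_map_inj : injective concat_map.
Proof. by move=> c d /sr_concat_inj eq_cd; apply/rowP => i; apply/phi_inj/eq_cd. Qed.

Lemma concat_map_weight d :
    (forall y, y != 0 -> (d <= sr_weight (phi y))%N) ->
  forall c, (d * ham_weight c <= sr_weight (concat_map c))%N.
Proof.
move=> phi_w c; rewrite sr_weight_concat /ham_weight mulnC -sum_nat_const big_mkcond.
by apply: leq_sum => i _; rewrite inE; case: ifP => // /phi_w.
Qed.

Definition concat_code (C1 : {vspace 'rV[K]_n}) : {vspace srspace F (n * t) m m'} :=
  <<[seq concat_map c | c <- enum C1]>>%VS.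

Lemma mem_concat_code (C1 : {vspace 'rV[K]_n}) x :
  reflect (exists2 c, c \in C1 & x = concat_map c) (x \in concat_code C1).
Proof.
apply: (iffP idP) => [|[c cC1 ->]]; last by apply/memv_span/map_f; rewrite mem_enum.
apply: (span_ind (P := fun x => exists2 c, c \in C1 & x = concat_map c))
  => [| a y z [c cC1 ->] [d dC1 ->] | y /mapP[c]]; rewrite ?mem_enum.
- by exists 0; rewrite ?mem0v ?concat_map0.
- by exists (psi a *: c + d); rewrite ?concat_mapZD // memvD ?memvZ.
- by move=> cC1 ->; exists c.
Qed.

Lemma dim_concat_code k (C1 : {vspace 'rV[K]_n}) :
  #|K| = (#|F| ^ k)%N -> \dim (concat_code C1) = (\dim C1 * k)%N.
Proof.
move=> cardK; apply: (expnI (finNzRing_gt1 F)).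
rewrite -card_vspace (mulnC (\dim C1)) expnM -cardK -card_vspace.
rewrite -(card_imset _ concat_map_inj).
by apply: eq_card => x; apply/mem_concat_code/imsetP.
Qed.

End ConcatenatedCode.

Theorem theorem6 (q : nat) (F : finFieldType) (hF : #|F| = q)
    (n t m m' : nat) (hn : (0 < n)%N) (ht : (0 < t)%N) (hm : (0 < m)%N) (hm' : (0 < m')%N)
    (k2 d2 : nat) (C2 : {vspace srspace F t m m'})
    (hk2 : \dim C2 = k2) (hd2 : min_dist_is (@sr_dist F t m m') C2 d2)
    (K : finFieldType) (hK : #|K| = (q ^ k2)%N)
    (k1 d1 : nat) (C1 : {vspace 'rV[K]_n})
    (hk1 : \dim C1 = k1) (hd1 : min_dist_is (@ham_dist K n) C1 d1) :
  exists C : {vspace srspace F (n * t) m m'},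
    \dim C = (k1 * k2)%N /\ min_dist_ge (@sr_dist F (n * t) m m') C (d1 * d2).
Proof.
subst q k1 k2.
have [psi] := finField_embedding hK.
have [phi [phiZD phi_inj phi_C2]] := exists_semilinear_embedding psi hK.
have phi_weight y : y != 0 -> (d2 <= sr_weight (phi y))%N.
  move=> y_nz; apply: (min_dist_is_weight hd2 (phi_C2 y)).
  by rewrite -(phi0 phiZD) (inj_eq phi_inj).
exists (concat_code phi C1); split; first exact: dim_concat_code.
apply: min_dist_ge_weight => _ /(mem_concat_code phiZD)[c cC1 ->] nz_c.
have c_nz : c != 0 by apply: contraNneq nz_c => ->; rewrite (concat_map0 _ phiZD).
apply: leq_trans (concat_map_weight phi_weight c); rewrite mulnC leq_mul2l.
by rewrite (min_dist_is_weight hd1) ?orbT.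
Qed.
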